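(* Let $\varphi(\bm x,\bm y,\bm z)$ be the conjunction $\bigwedge_{i=1}^n \bm r_i^\top\bm x<\bm s_i^\top\bm y+\bm t_i^\top\bm z+h_i\ \wedge\ \bigwedge_{j=1}^m \bm u_j^\top\bm x\approx^j_{e_j}\bm v_j^\top\bm y+\bm w_j^\top\bm z+d_j$ as in the context, and let $\bm c$ be an integer vector. Then $\exists^{\mathsf{ram}}\bm x,\bm y\colon\varphi(\bm x,\bm y,\bm c)$ holds over $\mathbb{Z}$ if and only if there exists an admissible profile $\bm p\in\mathbb{Z}_\omega^{2n}$ such that some sequence is compatible with $\bm p$ for $\bm c$.
   Context: All vectors $\bm r_i,\bm s_i,\bm t_i,\bm u_j,\bm v_j,\bm w_j$ are integer vectors, $h_i,d_j\in\mathbb{Z}$, $e_j>0$, and each $\approx^j_{e_j}$ is either $\equiv_{e_j}$ or $\not\equiv_{e_j}$, where $s\equiv_e t$ means $e\mid s-t$. Let $\mathbb{Z}_\omega=\mathbb{Z}\cup\{\omega\}$ with $\omega$ larger than all integers. A profile is a vector $\bm p=(p_1,\dots,p_{2n})\in\mathbb{Z}_\omega^{2n}$. For an integer vector $\bm c$, a sequence $\bm a_1,\bm a_2,\dots$ of pairwise distinct integer vectors is compatible with $\bm p$ for $\bm c$ if for all $k<\ell$ and all $j$, $\bm u_j^\top\bm a_k\approx^j_{e_j}\bm v_j^\top\bm a_\ell+\bm w_j^\top\bm c+d_j$, and for all $i\in[1,n]$: $\sup\{\bm r_i^\top\bm a_k\mid k\ge1\}\le p_{2i-1}$ and $p_{2i}\le\liminf\{\bm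 s_i^\top\bm a_k+\bm t_i^\top\bm c+h_i\mid k\ge1\}$ (where sup/liminf equal to $+\infty$ is identified with $\omega$). A profile is admissible if for every $i\in[1,n]$, $p_{2i-1}<p_{2i}$ or $p_{2i}=\omega$. Ramsey quantifier: $\exists^{\mathsf{ram}}\bm x,\bm y\colon\varphi(\bm x,\bm y,\bm c)$ holds iff there is an infinite sequence of pairwise distinct integer vectors $(\bm a_i)_{i\ge1}$ with $\varphi(\bm a_i,\bm a_j,\bm c)$ for all $i<j$. *)

From mathcomp Require Import all_boot all_order all_algebra intdiv.
Set Implicit Arguments. Unset Strict Implicit. Unset Printing Implicit Defensive.
Import Order.TTheory GRing.Theory Num.Theory.
Local Open Scope ring_scope.

Definition dotz (k : nat) (a b : 'rV[int]_k) : int := \sum_(i < k) a 0 i * b 0 i.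

(* Z_omega = Z ∪ {omega}, omega larger than every integer *)
Inductive zomega := Fin of int | Omega.

(* congruence relation  ≈_e : flag = true means ≡_e, flag = false means ≢_e *)
Definition approx (flag : bool) (e s t : int) : Prop :=
  if flag then ((e %| s - t)%Z : Prop) else ~~ (e %| s - t)%Z.

(* sup {f k | k >= 1} <= p  (sup = +oo identified with omega) *)
Definition sup_le (f : nat -> int) (p : zomega) : Prop :=
  match p with
  | Omega => True
  | Fin q => forall k, f k <= q
  end.

(* p <= liminf {f k | k >= 1}, unfolded for integer-valued sequences:
   liminf = +oo (= omega) iff f tends to +oo; for an integer q,
   q <= liminf f iff eventually q <= f k. *)
Definition le_liminf (p : zomega) (f : nat -> int) : Prop :=
  match p with
  | Omega => forall M : int, exists N, forall k, (N <= k)%N -> M <= f k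
  | Fin q => exists N, forall k, (N <= k)%N -> q <= f k
  end.

Definition zlt (a b : zomega) : Prop :=
  match a, b with
  | Fin x, Fin y => x < y
  | Fin _, Omega => True
  | Omega, _ => False
  end.

(* A profile p in Z_omega^{2n} is given by pO i = p_{2i-1}, pE i = p_{2i}. *)
Definition admissible (n : nat) (pO pE : 'I_n -> zomega) : Prop :=
  forall i, zlt (pO i) (pE i) \/ pE i = Omega.

Definition compatible (d l n m : nat)
  (r s : 'I_n -> 'rV[int]_d) (t : 'I_n -> 'rV[int]_l) (h : 'I_n -> int)
  (u v : 'I_m -> 'rV[int]_d) (w : 'I_m -> 'rV[int]_l) (dd e : 'I_m -> int)
  (flag : 'I_m -> bool)
  (c : 'rV[int]_l) (pO pE : 'I_n -> zomega) (a : nat -> 'rV[int]_d) : Prop :=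
  injective a /\
  (forall k k' j, (k < k')%N ->
     approx (flag j) (e j) (dotz (u j) (a k))
            (dotz (v j) (a k') + dotz (w j) c + dd j)) /\
  (forall i, sup_le (fun k => dotz (r i) (a k)) (pO i) /\
             le_liminf (pE i) (fun k => dotz (s i) (a k) + dotz (t i) c + h i)).

Definition phi (d l n m : nat)
  (r s : 'I_n -> 'rV[int]_d) (t : 'I_n -> 'rV[int]_l) (h : 'I_n -> int)
  (u v : 'I_m -> 'rV[int]_d) (w : 'I_m -> 'rV[int]_l) (dd e : 'I_m -> int)
  (flag : 'I_m -> bool) (x y : 'rV[int]_d) (z : 'rV[int]_l) : Prop :=
  (forall i, dotz (r i) x < dotz (s i) y + dotz (t i) z + h i) /\
  (forall j, approx (flag j) (e j) (dotz (u j) x) (dotz (v j) y + dotz (w j) z + dd j)).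

Definition ramsey_exists (d : nat) (P : 'rV[int]_d -> 'rV[int]_d -> Prop) : Prop :=
  exists a : nat -> 'rV[int]_d, injective a /\ forall i j, (i < j)%N -> P (a i) (a j).

(* For each i the values r_i.a_k are either unbounded, or bounded and then their
   maximum is attained at some index k0; since r_i.a_k < s_i.a_l + t_i.c + h_i
   for k < l, the right-hand side eventually exceeds that maximum, resp. tends
   to +oo, which yields an admissible profile.
   Conversely, an admissible profile says that every finite prefix of the left-
   hand sides is eventually dominated by the right-hand sides; choosing each
   next index past the threshold of the current one gives a subsequence on
   which all inequalities hold for i < j, and the congruences and the
   distinctness of the terms pass to subsequences. *)
From mathcomp Require Import all_boot all_order all_algebra zify.
From Stdlib Require Import Classical ClassicalEpsilon.
Set Implicit Arguments. Unset Strict Implicit. Unset Printing Implicit Defensive.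
Import Order.TTheory.
Local Open Scope ring_scope.

Lemma nat_seq_min_attained (g : nat -> nat) : exists k0, forall k, (g k0 <= g k)%N.
Proof.
apply: NNPP => no_min.
suff lower_bound N k : (N <= g k)%N by have := lower_bound (g 0%N).+1 0%N; rewrite ltnn.
elim: N k => // N IH k; rewrite ltn_neqAle IH andbT.
apply/eqP => gkN; apply: no_min; exists k => k'; rewrite -gkN; exact: IH.
Qed.

Lemma int_seq_max_attained (f : nat -> int) (M : int) :
  (forall k, f k <= M) -> exists k0, forall k, f k <= f k0.
Proof.
move=> fM; have [k0 k0_min] := nat_seq_min_attained (fun k => `|M - f k|%N).
exists k0 => k; have := k0_min k; have := fM k; have := fM k0; lia.
Qed.

Lemma seq_max_attained_or_unbounded (f : nat -> int) :
  (exists k0, forall k, f k <= f k0) \/ (forall M, exists k, M < f k).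
Proof.
case: (classic (forall M, exists k, M < f k)) => [|unbounded]; [by right | left].
suff [M fM] : exists M, forall k, f k <= M by exact: int_seq_max_attained fM.
apply: NNPP => no_bound; apply: unbounded => M; apply: NNPP => no_k.
apply: no_bound; exists M => k; rewrite leNgt; apply/negP => Mk; apply: no_k; by exists k.
Qed.

Lemma chain_lt_profile (f g : nat -> int) :
  (forall k l, (k < l)%N -> f k < g l) ->
  exists po pe, (zlt po pe \/ pe = Omega) /\ sup_le f po /\ le_liminf pe g.
Proof.
move=> chain; case: (seq_max_attained_or_unbounded f) => [[k0 k0_max]|unbounded].
  exists (Fin (f k0)), (Fin (f k0 + 1)); split; first by left => /=; lia.
  split=> //=; exists k0.+1 => l k0l; have := chain k0 l k0l; lia.
exists Omega, Omega; split; first by right.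
split=> //= M; have [k Mk] := unbounded M; exists k.+1 => l kl; have := chain k l kl; lia.
Qed.

Lemma prefix_bounded (f : nat -> int) (K : nat) :
  exists B, forall k, (k <= K)%N -> f k < B.
Proof.
exists ((\max_(i < K.+1) `|f i|)%N%:Z + 1) => k kK.
have /= := @leq_bigmax _ (fun i : 'I_K.+1 => `|f i|%N) (Ordinal (kK : (k < K.+1)%N)).
set B := (\max_(i < K.+1) _)%N; lia.
Qed.

Definition eventually_after_prefix (R : nat -> nat -> Prop) : Prop :=
  forall K, exists N, forall k l, (k <= K)%N -> (N <= l)%N -> R k l.

Lemma profile_eventually_lt (f g : nat -> int) (po pe : zomega) :
  zlt po pe \/ pe = Omega -> sup_le f po -> le_liminf pe g ->
  eventually_after_prefix (fun k l => f k < g l).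
Proof.
move=> adm sup liminf K; case: pe adm liminf => [qe|] adm liminf.
  case: po adm sup => [qo [/= qoe|//] sup | [|]//].
  have [N gN] := liminf; exists N => k l _ Nl; have := sup k; have := gN l Nl; lia.
have [B fB] := prefix_bounded f K; have [N gN] := liminf B.
exists N => k l kK Nl; have := fB k kK; have := gN l Nl; lia.
Qed.

Lemma eventually_after_prefix_all (I : finType) (R : I -> nat -> nat -> Prop) :
  (forall i, eventually_after_prefix (R i)) ->
  eventually_after_prefix (fun k l => forall i, R i k l).
Proof.
move=> ev K; have /fin_all_exists [N RN] := fun i => ev i K.
exists (\max_i N i) => k l kK Nl i; apply: RN kK _.
exact: leq_trans (leq_bigmax i) Nl.
Qed.

Lemma eventually_after_prefix_subseq (R : nat -> nat -> Prop) :
  eventually_after_prefix R ->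
  exists sigma : nat -> nat,
    {homo sigma : i j / (i < j)%N} /\ forall i j, (i < j)%N -> R (sigma i) (sigma j).
Proof.
move=> ev; have [N RN] := choice _ ev.
pose sigma j := iter j (fun x => maxn x.+1 (N x)) 0%N.
have sigma_inc : {homo sigma : i j / (i < j)%N}.
  by apply: homo_ltn => [y x z|j]; [exact: ltn_trans | exact: leq_maxl].
exists sigma; split=> // i j ij; apply: (RN (sigma i)) => //.
exact: leq_trans (leq_maxr _ _) (ltnW_homo sigma_inc ij).
Qed.

Theorem mainTheorem7 (d l n m : nat)
  (r s : 'I_n -> 'rV[int]_d) (t : 'I_n -> 'rV[int]_l) (h : 'I_n -> int)
  (u v : 'I_m -> 'rV[int]_d) (w : 'I_m -> 'rV[int]_l) (dd e : 'I_m -> int)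
  (flag : 'I_m -> bool)
  (he : forall j, 0 < e j)
  (c : 'rV[int]_l) :
  ramsey_exists (fun x y => phi r s t h u v w dd e flag x y c) <->
  exists (pO pE : 'I_n -> zomega), admissible pO pE /\
    exists a : nat -> 'rV[int]_d, compatible r s t h u v w dd e flag c pO pE a.
Proof.
split=> [[a [a_inj chain]] | [pO [pE [adm [a [a_inj [cong bounds]]]]]]].
  have /fin_all_exists [p p_prof] : forall i, exists p : zomega * zomega,
      (zlt p.1 p.2 \/ p.2 = Omega) /\ sup_le (fun k => dotz (r i) (a k)) p.1 /\
      le_liminf p.2 (fun k => dotz (s i) (a k) + dotz (t i) c + h i).
    move=> i; have [po [pe prof]] := chain_lt_profile (fun k k' kk' => proj1 (chain k k' kk') i).
    by exists (po, pe).
  exists (fun i => (p i).1), (fun i => (p i).2); split=> [i|]; first by case: (p_prof i).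
  exists a; split=> //; split=> [k k' j kk' | i]; first exact: proj2 (chain k k' kk') j.
  by case: (p_prof i).
have /eventually_after_prefix_subseq [sigma [sigma_inc ineq]] :
    eventually_after_prefix (fun k l => forall i,
      dotz (r i) (a k) < dotz (s i) (a l) + dotz (t i) c + h i).
  apply: eventually_after_prefix_all => i; have [sup liminf] := bounds i.
  exact: profile_eventually_lt (adm i) sup liminf.
exists (a \o sigma); split; first exact: inj_comp a_inj (incn_inj (leq_mono sigma_inc)).
by move=> i j ij; split=> [|jj]; [exact: ineq | exact: cong (sigma_inc _ _ ij)].
Qed.
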